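(* Let $\Pi = (\mathcal{A}, \mathcal{E}, \mathcal{R})$ be an epistemic logic program and let $\Pi' = (\mathcal{A}, \mathcal{E}', \mathcal{R})$ be an epistemic logic program with the same set of rules and the same set of atoms, but with $\mathcal{E}' \supset \mathcal{E}$ and $\mathcal{E}' \setminus \mathcal{E} = \{ \mathbf{not}\, \ell \}$ for a single epistemic literal $\mathbf{not}\,\ell$. Then $\mathrm{CWV}(\Pi) = \mathrm{CWV}(\Pi')$.
   Context: A literal over a set of propositional atoms $\mathcal{A}$ is an atom $a$ or its default negation $\neg a$. An interpretation is a set $I\subseteq\mathcal{A}$; $I\models a$ iff $a\in I$, $I\models \neg \ell$ iff $I\not\models \ell$, extended to sets of literals conjunctively. A (plain) logic program is a pair $(\mathcal{A},\mathcal{R})$ with rules $a_1\vee\cdots\vee a_l \leftarrow a_{l+1},\ldots,a_m,\neg\ell_1,\ldots,\neg\ell_n$ ($a_i$ atoms, $\ell_i$ literals); $H(r)$ is the head, $B(r)$ the body, $B^+(r)=\{a_{l+1},\ldots,a_m\}$. $M\models r$ iff $M\models B(r)$ implies $M$ contains some atom of $H(r)$. The GL-reduct of $\Pi$ w.r.t. $I$ is $(\mathcal{A},\{H(r)\leftarrow B^+(r)\mid r\in\mathcal{R},\ I\models\neg\ell\text{ for all }\neg\ell\in B(r)\})$. $M$ is an answer set iff $M$ is a model of $\Pi$ and no $M'\subset M$ is a model of $\Pi^M$; $AS(\Pi)$ is the set of answer sets ($\neg\neg\neg a$ is treated as $\neg a$). An epistemic literal is $\mathbf{not}\,\ell$ for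 a literal $\ell$. An ELP is a triple $(\mathcal{A},\mathcal{E},\mathcal{R})$, $\mathcal{E}$ a set of epistemic literals over $\mathcal{A}$, rules $a_1\vee\cdots\vee a_k\leftarrow \ell_1,\ldots,\ell_m,\xi_1,\ldots,\xi_j,\neg\xi_{j+1},\ldots,\neg\xi_n$ with $\xi_i\in\mathcal{E}$. A guess is $\Phi\subseteq\mathcal{E}$. A set $\mathcal{I}$ of interpretations is $\Phi$-compatible w.r.t. $\mathcal{E}$ iff $\mathcal{I}\neq\emptyset$, for each $\mathbf{not}\,\ell\in\Phi$ some $I\in\mathcal{I}$ has $I\not\models\ell$, and for each $\mathbf{not}\,\ell\in\mathcal{E}\setminus\Phi$ all $I\in\mathcal{I}$ satisfy $\ell$. The epistemic reduct $\Pi^\Phi=(\mathcal{A},\mathcal{R}^\Phi)$ replaces each $\mathbf{not}\,\ell\in\Phi$ by $\top$ and every remaining $\mathbf{not}$ by $\neg$. $\mathcal{M}$ is a candidate world view of $\Pi$ iff for some guess $\Phi$, $\mathcal{M}=AS(\Pi^\Phi)$ and $\mathcal{M}$ is $\Phi$-compatible w.r.t. $\mathcal{E}$ (the domain $\mathcal{E}$ of the respective program); $\mathrm{CWV}(\Pi)$ is the set of these. *)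

From HB Require Import structures.
From mathcomp Require Import all_boot.
Set Implicit Arguments. Unset Strict Implicit. Unset Printing Implicit Defensive.

Section ELP.
Variable A : finType.

(* A literal is an atom a, encoded (true, a), or its default negation ~a,
   encoded (false, a). *)
Definition lit := (bool * A)%type.
Definition LPos (a : A) : lit := (true, a).
Definition LNeg (a : A) : lit := (false, a).

Definition interp := {set A}.

Definition sat_lit (I : interp) (l : lit) : bool :=
  if l.1 then l.2 \in I else l.2 \notin I.

(* Body elements of plain rules: an atom a, a negated literal ~l
   (so ~a and ~~a), and the constants T (top) and ~T (= bottom) that
   arise from the epistemic reduct. *)
Inductive pbody := PAtom of A | PNeg of lit | PTop | PBot.

Record prule := PRule { phead : seq A; pbodies : seq pbody }.
Definition pprog := seq prule.

Definition sat_pbody (I : interp) (b : pbody) : bool :=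
  match b with
  | PAtom a => a \in I
  | PNeg l => ~~ sat_lit I l
  | PTop => true
  | PBot => false
  end.

Definition sat_body (I : interp) (r : prule) : bool :=
  all (sat_pbody I) (pbodies r).

Definition sat_rule (M : interp) (r : prule) : bool :=
  sat_body M r ==> has (fun a => a \in M) (phead r).

Definition models (M : interp) (P : pprog) : bool := all (sat_rule M) P.

Definition bplus (r : prule) : seq A :=
  pmap (fun b => if b is PAtom a then Some a else None) (pbodies r).

Definition neg_ok (I : interp) (b : pbody) : bool :=
  match b with
  | PNeg l => ~~ sat_lit I l
  | PBot => false
  | _ => true
  end.

Definition gl_reduct (P : pprog) (I : interp) : pprog :=
  [seq PRule (phead r) [seq PAtom a | a <- bplus r] |
     r <- P & all (neg_ok I) (pbodies r)].

Definition is_answer_set (P : pprog) (M : interp) : bool :=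
  models M P &&
  [forall M' : {set A}, (M' \proper M) ==> ~~ models M' (gl_reduct P M)].

Definition AS (P : pprog) : {set {set A}} := [set M | is_answer_set P M].

(* An epistemic literal "not l" is represented by the literal l. *)
Record erule := ERule {
  ehead : seq A;
  elits : seq lit;
  epos  : seq lit;        (* xi_1, ..., xi_j   (xi = not l, stored as l) *)
  eneg  : seq lit
}.

(* An ELP (A, E, R): atoms are the type A, E : {set lit}, R : seq erule,
   with every epistemic literal occurring in R belonging to E. *)
Definition wf_elp (E : {set lit}) (R : seq erule) : bool :=
  all (fun r => all (fun x => x \in E) (epos r) &&
                all (fun x => x \in E) (eneg r)) R.

Definition lit_body (l : lit) : pbody :=
  if l.1 then PAtom l.2 else PNeg (LPos l.2).

(* epistemic reduct w.r.t. guess Phi: not l in Phi becomes T, every other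
   not l becomes ~l; hence ~(not l) becomes ~T (bottom) if not l in Phi and
   ~~l otherwise, where ~~~a is read as ~a. *)
Definition red_pos (Phi : {set lit}) (l : lit) : pbody :=
  if l \in Phi then PTop else PNeg l.
Definition red_neg (Phi : {set lit}) (l : lit) : pbody :=
  if l \in Phi then PBot
  else if l.1 then PNeg (LNeg l.2)
  else PNeg (LPos l.2).

Definition ereduct_rule (Phi : {set lit}) (r : erule) : prule :=
  PRule (ehead r)
        ([seq lit_body l | l <- elits r] ++
         [seq red_pos Phi l | l <- epos r] ++
         [seq red_neg Phi l | l <- eneg r]).

Definition ereduct (R : seq erule) (Phi : {set lit}) : pprog :=
  [seq ereduct_rule Phi r | r <- R].

Definition compatible (E Phi : {set lit}) (M : {set {set A}}) : Prop :=
  M != set0 /\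
  (forall l, l \in Phi -> exists2 I, I \in M & ~~ sat_lit I l) /\
  (forall l, l \in E :\: Phi -> forall I, I \in M -> sat_lit I l).

Definition is_cwv (E : {set lit}) (R : seq erule) (M : {set {set A}}) : Prop :=
  exists Phi : {set lit}, Phi \subset E /\ M = AS (ereduct R Phi) /\
                          compatible E Phi M.

End ELP.

From mathcomp Require Import all_boot.

Set Implicit Arguments.
Unset Strict Implicit.
Unset Printing Implicit Defensive.

(* The guess witnessing a candidate world view M is forced: compatibility says
   precisely that it is the set of literals of E falsified by some member of M.
   Enlarging E by literals that do not occur in the rules changes this guess
   only at literals the epistemic reduct never inspects, so the reduct, its
   answer sets and hence the candidate world views are unchanged. *)

Section CandidateWorldViews.

Variable A : finType.
Implicit Types (E Phi : {set lit A}) (R : seq (erule A)) (M : {set {set A}}).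

Definition falsified M : {set lit A} := [set x | [exists I in M, ~~ sat_lit I x]].

Lemma eq_in_ereduct E R Phi1 Phi2 :
  wf_elp E R -> {in E, forall x, (x \in Phi1) = (x \in Phi2)} ->
  ereduct R Phi1 = ereduct R Phi2.
Proof.
move=> wfR eqPhi; elim: R wfR => [|r R IHR] //= /andP[/andP[/allP posE /allP negE] wfR].
rewrite IHR //; congr cons; rewrite /ereduct_rule; congr PRule; congr (_ ++ _ ++ _).
  by apply/eq_in_map => x /posE xE; rewrite /red_pos eqPhi.
by apply/eq_in_map => x /negE xE; rewrite /red_neg eqPhi.
Qed.

Lemma compatibleE E Phi M :
  Phi \subset E -> compatible E Phi M <-> M != set0 /\ Phi = E :&: falsified M.
Proof.
move=> sPhiE; split=> [[M0 [PhiF EPhiT]] | [M0 ->]].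
  split=> //; apply/setP=> x; rewrite in_setI inE.
  have [xPhi | xPhi] := boolP (x \in Phi).
    rewrite (subsetP sPhiE x xPhi); have [I IM nI] := PhiF x xPhi.
    by apply/esym/exists_inP; exists I.
  have [xE | //] := boolP (x \in E); apply/esym/negbTE/exists_inP => -[I IM].
  by rewrite EPhiT // in_setD xPhi.
split=> //; split=> [x | x /setDP[xE]].
  by rewrite !inE => /andP[_ /exists_inP[I IM nI]]; exists I.
rewrite in_setI xE inE => /exists_inPn satI I IM.
by have /negPn := satI I IM.
Qed.

Lemma is_cwvE E R M :
  is_cwv E R M <-> M != set0 /\ M = AS (ereduct R (E :&: falsified M)).
Proof.
split=> [[Phi [sPhiE [ASM /(compatibleE _ sPhiE)[M0 PhiE]]]] | [M0 ASM]].
  by rewrite -PhiE.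
exists (E :&: falsified M); split; first exact: subsetIl.
by split=> //; apply/compatibleE; first exact: subsetIl.
Qed.

Lemma is_cwv_superset E E' R M :
  wf_elp E R -> E \subset E' -> is_cwv E R M <-> is_cwv E' R M.
Proof.
move=> wfR sEE'.
have eq_red : ereduct R (E :&: falsified M) = ereduct R (E' :&: falsified M).
  by apply: (eq_in_ereduct wfR) => x xE; rewrite !in_setI xE (subsetP sEE' x xE).
split=> /is_cwvE[M0 ASM]; apply/is_cwvE.
  by rewrite -eq_red.
by rewrite eq_red.
Qed.

End CandidateWorldViews.

Theorem proposition3 (A : finType) (E E' : {set lit A}) (R : seq (erule A))
    (l : lit A) :
  wf_elp E R -> wf_elp E' R ->
  E \subset E' -> E' :\: E = [set l] ->
  forall M : {set {set A}}, is_cwv E R M <-> is_cwv E' R M.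
Proof.
by move=> wfR _ sEE' _ M; apply: is_cwv_superset.
Qed.
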